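(* Let $n\ge 2$ and let $F$ be an exponential functor with $\deg F(t)>0$. Consider $R_{F,\mathbb{Q}}$ with the $W=S_n$-action by signed permutations of variables, denoted $R_{F,\mathbb{Q}}^{\mathrm{sgn}}$, and the ideal $I_{F,\mathbb{Q}}=(F(t_2)-F(t_1),\dots,F(t_n)-F(t_{n-1}))$ with this action, denoted $I_{F,\mathbb{Q}}^{\mathrm{sgn}}$. Then the $R_{F,\mathbb{Q}}^W$-submodule $(I_{F,\mathbb{Q}}^{\mathrm{sgn}})^W$ of $(R_{F,\mathbb{Q}}^{\mathrm{sgn}})^W$ is generated by the $n-1$ antisymmetric polynomials $q_0,\dots,q_{n-2}$, where \[ q_i(t_1,\dots,t_n)=\det\begin{pmatrix} F(t_1)t_1^i & \cdots & F(t_n)t_n^i\\ t_1^{n-2}&\cdots&t_n^{n-2}\\ \vdots&\ddots&\vdots\\ t_1&\cdots&t_n\\ 1&\cdots&1\end{pmatrix}. \]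
   Context: $F$ is an exponential functor: a continuous symmetric monoidal functor from finite-dimensional complex inner product spaces (unitaries, $\oplus$) to finite-dimensional complex inner product super-vector spaces (grading-preserving unitaries, graded $\otimes$), preserving duals, with $F(\mathbb{C})$ having only positive $S^1$-characters; $F(t)\in\mathbb{Z}[t]$ is its graded (even minus odd) character polynomial. $R_{F,\mathbb{Q}}=\big(\mathbb{Q}[t_1,\dots,t_n]/(t_1\cdots t_n-1)\big)[F(t_1)^{-1},\dots,F(t_n)^{-1}]$; $R_{F,\mathbb{Q}}^W$ denotes invariants for the ordinary permutation action. The signed action is $\sigma\cdot f=\mathrm{sign}(\sigma)\,(f\circ\sigma)$ (permuting variables); $(\cdot)^W$ denotes fixed points. *)

From HB Require Import structures.
From mathcomp Require Import all_boot all_order all_algebra all_fingroup.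
From mathcomp Require Import mpoly.
Unset Printing Implicit Defensive.
Import GRing.Theory.
Local Open Scope ring_scope.

(* The ring R_{F,Q} = (Q[t_1..t_n]/(t_1...t_n - 1))[F(t_1)^-1,...,F(t_n)^-1]
   is modelled by representatives: a pair (a, k) with a in Q[t_1..t_n]
   stands for the class of a / D^k, where D = F(t_1)...F(t_n). *)

Section RF.
Variables (n : nat) (f : {poly int}).

Definition P := {mpoly rat[n]}.

Definition Ft (i : 'I_n) : P :=
  \sum_(j < size f) ((f`_j)%:~R : rat) *: ('X_i ^+ j).

Definition Dprod : P := \prod_(i < n) Ft i.

Definition inJ (a : P) : Prop :=
  exists g : P, a = g * (\prod_(i < n) 'X_i - 1).

Definition R_eq (a : P) (k : nat) (b : P) (m : nat) : Prop :=
  exists r : nat, inJ (Dprod ^+ r * (a * Dprod ^+ m - b * Dprod ^+ k)).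

Definition sgnp (s : 'S_n) : rat := (-1) ^+ odd_perm s.

(* a / D^k is fixed by the ordinary permutation action (D is symmetric) *)
Definition R_sym (a : P) (k : nat) : Prop :=
  forall s : 'S_n, R_eq (msym s a) k a k.

Definition R_sgn_inv (a : P) (k : nat) : Prop :=
  forall s : 'S_n, R_eq (sgnp s *: msym s a) k a k.

Definition R_inI (a : P) (k : nat) : Prop :=
  exists (c : 'I_n -> 'I_n -> P) (l : nat),
    R_eq a k (\sum_(i < n) \sum_(j < n | j == i.+1 :> nat) c i j * (Ft j - Ft i)) l.

Definition qmat (i : nat) : 'M[P]_n :=
  \matrix_(r < n, j < n)
     (if r == 0%N :> nat then Ft j * 'X_j ^+ i else 'X_j ^+ (n.-1 - r)).

Definition q (i : nat) : P := \det (qmat i).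

End RF.

From HB Require Import structures.
From mathcomp Require Import all_boot all_order all_algebra all_fingroup.
From mathcomp Require Import mpoly.
From mathcomp Require Import zify ring.
Local Open Scope ring_scope.
Import GRing.Theory Num.Theory.

(* Antisymmetrization sends c * (F(t_j) - F(t_i)) to a difference of two
   alternants det (t_k ^ mu_r * (F(t_k) in row j, resp. row i)).  Multiplying
   an alternant by adj V, V the Vandermonde matrix of the t_k, shows that it
   depends linearly on the row phi(w) = (w(t_k))_k * adj V of Delta-scaled
   interpolation coefficients of the weights w in its special row:
   multiplication by t_k acts on phi through the companion matrix of
   prod_k (X - t_k), and the other rows are multiples of Delta.  The coefficient
   of the last entry of phi does not depend on the special row (take w = 1),
   so the difference only involves the other entries of phi(F), and the
   companion recursion writes these through phi_0(t^a F) = q_a, a < n - 1.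
   Hence alt(I) lies in the ideal generated by the q_a.  An element a of
   (I^sgn)^W satisfies n! a = alt(a) in R_F, and symmetrizing the coefficients
   of alt(a) in terms of the antisymmetric q_a makes them W-invariant.
   Conversely q_a is an alternant, hence antisymmetric, and it lies in I since
   q_a = sum_k (F(t_k) - F(t_1)) t_k^a C_1k with C_1k the cofactors of V. *)

Section IdealMembership.
Context {R : comPzRingType} {I : finType} (g : I -> R).

Definition in_ideal (p : R) : Prop := exists h : I -> R, p = \sum_i h i * g i.

Lemma in_ideal0 : in_ideal 0.
Proof. by exists (fun=> 0); rewrite big1 // => i _; rewrite mul0r. Qed.

Lemma in_idealD p1 p2 : in_ideal p1 -> in_ideal p2 -> in_ideal (p1 + p2).
Proof.
move=> [h1 ->] [h2 ->]; exists (fun i => h1 i + h2 i).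
by rewrite -big_split; apply: eq_bigr => i _; rewrite mulrDl.
Qed.

Lemma in_idealMl y p : in_ideal p -> in_ideal (y * p).
Proof.
move=> [h ->]; exists (fun i => y * h i).
by rewrite mulr_sumr; apply: eq_bigr => i _; rewrite mulrA.
Qed.

Lemma in_idealB p1 p2 : in_ideal p1 -> in_ideal p2 -> in_ideal (p1 - p2).
Proof. by move=> h1 h2; apply: in_idealD => //; rewrite -mulN1r; apply: in_idealMl. Qed.

Lemma in_ideal_sum (J : finType) (P : pred J) (F : J -> R) :
  (forall j, P j -> in_ideal (F j)) -> in_ideal (\sum_(j | P j) F j).
Proof. by move=> F_in; apply: big_ind => //; [exact: in_ideal0 | exact: in_idealD]. Qed.

Lemma in_ideal_gen i : in_ideal (g i).
Proof.
exists (fun j => (j == i)%:R); rewrite (bigD1 i) //= eqxx mul1r big1 ?addr0 //.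
by move=> j /negbTE ->; rewrite mul0r.
Qed.

End IdealMembership.

Lemma eq_in_ideal (R : comPzRingType) (I : finType) (g g' : I -> R) p :
  g =1 g' -> in_ideal g p -> in_ideal g' p.
Proof. by move=> eq_g [h ->]; exists h; apply: eq_bigr => i _; rewrite eq_g. Qed.

Lemma eq_cofactor (R : comPzRingType) m (A B : 'M[R]_m) i j :
  (forall r c, r != i -> A r c = B r c) -> cofactor A i j = cofactor B i j.
Proof.
move=> eqAB; rewrite /cofactor; congr (_ * \det _); apply/matrixP=> r c.
by rewrite !mxE eqAB // eq_sym neq_lift.
Qed.

Section Alternants.
Context {R : idomainType} {n : nat} (x : 'I_n.+1 -> R).
Hypothesis x_inj : injective x.
Local Notation N := n.+1.

Definition vdm : 'M[R]_N := \matrix_(r, k) x k ^+ (n - r).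

Lemma det_vdm_neq0 : \det vdm != 0.
Proof.
pose s : 'S_N := perm (@rev_ord_inj N).
have -> : vdm = row_perm s (Vandermonde N (\row_k x k)).
  by apply/matrixP=> r k; rewrite !mxE permE.
rewrite row_permE det_mulmx det_perm det_Vandermonde mulf_neq0 ?signr_eq0 //.
apply/prodf_neq0 => i _; apply/prodf_neq0 => j ij; rewrite !mxE subr_eq0.
by apply/eqP => /x_inj /eqP; rewrite -val_eqE /= gtn_eqF.
Qed.

Definition vpoly : {poly R} := \prod_k ('X - (x k)%:P).

Definition companion : 'M[R]_N := \matrix_(r, i)
  if r == 0 :> nat then - vpoly`_(n - i) else (i.+1 == r :> nat)%:R.

Lemma expx_companion k : x k ^+ N = \sum_i companion 0 i * x k ^+ (n - i).
Proof.
have size_vpoly : size vpoly = N.+1.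
  rewrite /vpoly -(big_map x xpredT (fun y => 'X - y%:P)) size_prod_XsubC size_map.
  by rewrite [index_enum _]unlock -enumT size_enum_ord.
have lead_vpoly : vpoly`_N = 1.
  have /monicP : vpoly \is monic by apply: monic_prod => i _; apply: monicXsubC.
  by rewrite lead_coefE size_vpoly.
have : vpoly.[x k] = 0.
  rewrite horner_prod; apply/eqP; rewrite prodf_seq_eq0; apply/hasP.
  by exists k; rewrite ?mem_index_enum //= !hornerE subrr.
rewrite horner_coef size_vpoly big_ord_recr /= lead_vpoly mul1r.
move/eqP; rewrite addrC addr_eq0 => /eqP ->.
rewrite -sumrN (reindex_inj rev_ord_inj); apply: eq_bigr => i _.
by rewrite mxE /= mulNr subSS.
Qed.

Lemma vdm_mul_diag : vdm *m diag_mx (\row_k x k) = companion *m vdm.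
Proof.
apply/matrixP=> r k; rewrite mul_mx_diag !mxE.
case: r => [[|r] lt_rN] /=.
  rewrite subn0 -exprSr expx_companion; apply: eq_bigr => i _.
  by rewrite !mxE.
rewrite (bigD1 (Ordinal (ltnW lt_rN))) //= !mxE /= eqxx mul1r big1 ?addr0.
  by rewrite -exprSr subnSK.
move=> i /= ne; rewrite !mxE /=; case: eqP => [[e]|]; last by rewrite mul0r.
by move: ne; rewrite -val_eqE /= e eqxx.
Qed.

Lemma diag_mul_adj_vdm : diag_mx (\row_k x k) *m \adj vdm = \adj vdm *m companion.
Proof.
set T := diag_mx _.
have : \adj vdm *m (vdm *m T) *m \adj vdm = \adj vdm *m (companion *m vdm) *m \adj vdm.
  by rewrite vdm_mul_diag.
rewrite !mulmxA mul_adj_mx -(mulmxA _ vdm) mul_mx_adj mul_scalar_mx mul_mx_scalar.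
rewrite -scalemxAl => /matrixP eqT; apply/matrixP=> r k.
by apply: (mulfI det_vdm_neq0); move: (eqT r k); rewrite !mxE.
Qed.

(* Entry m of [interp w] is the determinant of [vdm] with row m replaced by w,
   i.e. det vdm times the coefficient of t^(n - m) in the polynomial of degree
   at most n interpolating w at the points x. *)
Definition interp (w : 'I_N -> R) : 'rV[R]_N := \row_k w k *m \adj vdm.

Definition powx (a : nat) (w : 'I_N -> R) (k : 'I_N) : R := x k ^+ a * w k.

Lemma interp_powx a w : interp (powx a w) = interp w *m companion ^+ a.
Proof.
elim: a => [|a IH].
  rewrite expr0 mulmx1 /interp; congr (_ *m _).
  by apply/matrixP=> i k; rewrite !mxE /powx expr0 mul1r.
rewrite /interp.
have -> : \row_k powx a.+1 w k = \row_k powx a w k *m diag_mx (\row_k x k).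
  by apply/matrixP=> i k; rewrite mul_mx_diag !mxE /powx exprSr mulrAC.
by rewrite -mulmxA diag_mul_adj_vdm mulmxA -/(interp _) IH exprSr mulmxA.
Qed.

Lemma interp1 : interp (fun=> 1) = \det vdm *: delta_mx 0 ord_max.
Proof.
rewrite /interp; have -> : \row_k (1 : R) = row ord_max vdm.
  by apply/matrixP=> i k; rewrite !mxE subnn.
rewrite -row_mul mul_mx_adj; apply/matrixP=> i k; rewrite !mxE /=.
by rewrite ord1 eqxx /= mulr_natr eq_sym.
Qed.

Lemma interp_det w m (A : 'M[R]_N) :
  (forall r k, r != m -> A r k = vdm r k) -> (forall k, A m k = w k) ->
  interp w 0 m = \det A.
Proof.
move=> Avdm Aw; rewrite mxE (expand_det_row _ m); apply: eq_bigr => k _.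
by rewrite !mxE Aw (@eq_cofactor _ _ A vdm m k Avdm).
Qed.

Lemma interp_expx a : (a < n)%N -> interp (fun k => x k ^+ a) 0 0 = 0.
Proof.
move=> lt_an; have lt_naN : (n - a < N)%N by rewrite ltnS leq_subr.
have na_neq0 : (n - a != 0)%N by rewrite subn_eq0 -ltnNge.
pose A : 'M[R]_N := \matrix_(r, k) if r == 0 then x k ^+ a else vdm r k.
rewrite (@interp_det _ _ A) => [|r k /negbTE r0|k]; rewrite ?mxE ?r0 ?eqxx //.
apply: (@determinant_alternate _ _ _ 0 (Ordinal lt_naN)).
  by rewrite -val_eqE /= eq_sym.
by move=> k; rewrite !mxE eqxx -val_eqE /= (negbTE na_neq0) subKn // ltnW.
Qed.

Lemma interp0_powx a w : (a < n)%N ->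
  interp (powx a w) 0 0 = \sum_k (w k - w 0) * (x k ^+ a * cofactor vdm 0 k).
Proof.
move=> lt_an; under eq_bigr do rewrite mulrBl.
rewrite sumrB -mulr_sumr.
have -> : \sum_k x k ^+ a * cofactor vdm 0 k = interp (fun k => x k ^+ a) 0 0.
  by rewrite mxE; apply: eq_bigr => k _; rewrite !mxE.
rewrite interp_expx // mulr0 subr0 mxE; apply: eq_bigr => k _.
by rewrite !mxE /powx -mulrA mulrCA.
Qed.

Lemma interp_shift w m : (m < n)%N ->
  interp w 0 (inord m.+1) =
    interp (powx 1 w) 0 (inord m) - companion 0 (inord m) * interp w 0 0.
Proof.
move=> lt_mn; have lt_mN : (m < N)%N := leqW lt_mn.
rewrite interp_powx expr1 [X in _ = X - _]mxE (bigD1 0) //=.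
rewrite (bigD1 (inord m.+1)) /=; last by rewrite -val_eqE /= inordK.
rewrite big1 ?addr0 => [|r /andP [r0 rm]].
  rewrite [companion (inord m.+1) _]mxE /= !inordK // eqxx mulr1.
  by rewrite mulrC addrAC subrr add0r.
rewrite [companion _ _]mxE; move: r0; rewrite -val_eqE /= => /negbTE ->.
rewrite inordK // (_ : (m.+1 == r) = false) ?mulr0 //.
by apply: contraNF rm => /eqP mr; rewrite -val_eqE /= inordK // mr.
Qed.

Lemma interp_in_ideal w m : m != ord_max ->
  in_ideal (fun b : 'I_n => interp (powx b w) 0 0) (interp w 0 m).
Proof.
pose G : 'I_n -> R := fun b => interp (powx b w) 0 0.
suff in_G a i : (a + i < n)%N -> in_ideal G (interp (powx a w) 0 (inord i)).
  move=> m_max; have -> : interp w = interp (powx 0 w) by rewrite interp_powx mulmx1.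
  rewrite -[m]inord_val; apply: in_G; rewrite add0n.
  by move: m_max (ltn_ord m); rewrite -val_eqE /= ltnS leq_eqVlt => /negbTE ->.
elim: i a => [|i IH] a lt_ain.
  rewrite addn0 in lt_ain; rewrite (_ : inord 0 = 0); last by apply/val_inj/inordK.
  exact: (in_ideal_gen G (Ordinal lt_ain)).
have lt_an : (a < n)%N by lia.
rewrite interp_shift; last by lia.
apply: in_idealB; last by apply: in_idealMl; exact: (in_ideal_gen G (Ordinal lt_an)).
have -> : interp (powx 1 (powx a w)) = interp (powx a.+1 w).
  by rewrite !interp_powx -mulmxA mulmxE -exprD addn1.
by apply: IH; rewrite addSnnS.
Qed.

Definition alternant (mu : 'I_N -> nat) (j : 'I_N) (w : 'I_N -> R) : 'M[R]_N :=
  \matrix_(r, k) (x k ^+ mu r * (if r == j then w k else 1)).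

Lemma det_adj_vdm : \det (\adj vdm) = \det vdm ^+ n.
Proof.
by apply: (mulfI det_vdm_neq0); rewrite -exprS -det_mulmx mul_mx_adj det_scalar.
Qed.

(* Right multiplication by adj vdm maps each row of the alternant to its
   interpolation row; the rows other than j become det vdm times a row that does
   not depend on w, and these factors cancel in the determinant. *)
Lemma det_alternant_linear mu j : exists v : 'cV[R]_N,
  forall w, \det (alternant mu j w) = (interp w *m v) 0 0.
Proof.
pose K := fun w : 'I_N -> R => \matrix_(r < N)
  ((if r == j then interp w else delta_mx 0 ord_max) *m companion ^+ mu r).
pose d : 'rV[R]_N := \row_r (if r == j then 1 else \det vdm).
have alternant_adj w : alternant mu j w *m \adj vdm = diag_mx d *m K w.
  apply/row_matrixP => r; rewrite !row_mul.
  have -> : row r (alternant mu j w) =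
            \row_k powx (mu r) (if r == j then w else fun=> 1) k.
    by apply/rowP => k; rewrite !mxE; case: eqP.
  rewrite -/(interp _) interp_powx row_diag_mx -scalemxAl -rowE rowK mxE.
  by case: eqP => _; rewrite ?scale1r // interp1 scalemxAl.
have prod_d : \prod_r d 0 r = \det vdm ^+ n.
  rewrite (bigD1 j) //= mxE eqxx mul1r (eq_bigr (fun=> \det vdm)).
    by rewrite prodr_const cardC1 card_ord.
  by move=> r /negbTE rj; rewrite mxE rj.
have det_K w : \det (alternant mu j w) = \det (K w).
  apply: (mulIf (expf_neq0 n det_vdm_neq0)).
  rewrite -det_adj_vdm -det_mulmx alternant_adj det_mulmx det_diag prod_d.
  by rewrite mulrC det_adj_vdm.
exists (companion ^+ mu j *m \col_k cofactor (K (fun=> 0)) j k) => w.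
rewrite det_K (expand_det_row _ j) mulmxA mxE; apply: eq_bigr => k _.
have -> : cofactor (K w) j k = cofactor (K (fun=> 0)) j k.
  by apply: eq_cofactor => r c /negbTE rj; rewrite !mxE rj.
by rewrite [in RHS]mxE !mxE eqxx.
Qed.

Lemma det_alternant_sub mu i j w :
  in_ideal (fun b : 'I_n => interp (powx b w) 0 0)
    (\det (alternant mu j w) - \det (alternant mu i w)).
Proof.
have [vj detj] := det_alternant_linear mu j; have [vi deti] := det_alternant_linear mu i.
(* For w = 1 the two alternants coincide, and only the last entry of
   interp 1 is nonzero. *)
have last_eq : vj ord_max 0 = vi ord_max 0.
  have : \det (alternant mu j (fun=> 1)) = \det (alternant mu i (fun=> 1)).
    by congr (\det _); apply/matrixP=> r k; rewrite !mxE !if_same.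
  rewrite detj deti interp1 -!scalemxAl -!rowE !mxE.
  exact: (mulfI det_vdm_neq0).
rewrite detj deti !mxE -sumrB (bigD1 ord_max) //= last_eq subrr add0r.
apply: in_ideal_sum => m m_max; rewrite -mulrBr mulrC.
by apply: in_idealMl; apply: interp_in_ideal.
Qed.

End Alternants.

Section SignedSymmetrization.
Context {n : nat}.
Implicit Types (p : P n) (s t : 'S_n).

Lemma sgnpM s t : sgnp n (s * t)%g = sgnp n s * sgnp n t.
Proof. by rewrite /sgnp odd_permM signr_addb. Qed.

Lemma sgnp_mul_self s : sgnp n s * sgnp n s = 1.
Proof. by rewrite /sgnp -signr_addb addbb. Qed.

Definition alt p : P n := \sum_(s : 'S_n) sgnp n s *: msym s p.

Definition sym p : P n := \sum_(s : 'S_n) msym s p.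

Fact alt_is_linear : linear alt.
Proof.
move=> c p1 p2; rewrite /alt scaler_sumr -big_split; apply: eq_bigr => s _ /=.
by rewrite msymD msymZ scalerDr !scalerA mulrC.
Qed.

HB.instance Definition _ := GRing.isLinear.Build rat (P n) (P n) _ alt alt_is_linear.

Lemma msym_alt t p : msym t (alt p) = sgnp n t *: alt p.
Proof.
rewrite /alt raddf_sum scaler_sumr [RHS](reindex_inj (mulIg t)); apply: eq_bigr => s _.
by rewrite /= msymZ -msymMm scalerA sgnpM mulrCA sgnp_mul_self mulr1.
Qed.

Lemma msym_sym t p : msym t (sym p) = sym p.
Proof.
rewrite /sym raddf_sum [RHS](reindex_inj (mulIg t)).
by apply: eq_bigr => s _; rewrite /= -msymMm.
Qed.

Lemma antisym_sym_coef (I : finType) (g h : I -> P n) p :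
    (forall s i, msym s (g i) = sgnp n s *: g i) ->
    (forall s, msym s p = sgnp n s *: p) ->
  p = \sum_i h i * g i -> n`!%:R *: p = \sum_i sym (h i) * g i.
Proof.
move=> g_anti p_anti p_eq.
under [RHS]eq_bigr do rewrite mulr_suml.
have -> : n`!%:R *: p = \sum_(s : 'S_n) p by rewrite sumr_const card_Sn scaler_nat.
rewrite exchange_big; apply: eq_bigr => s _.
rewrite -[p in LHS]scale1r -(sgnp_mul_self s) -scalerA -p_anti p_eq.
rewrite (raddf_sum (msym s)) scaler_sumr; apply: eq_bigr => i _ /=.
by rewrite msymM g_anti -scalerAr scalerA sgnp_mul_self scale1r.
Qed.

Lemma msymX1 s (i : 'I_n) : msym s ('X_i : P n) = 'X_(s i).
Proof.
rewrite msymX; congr 'X_[_]; apply/mnmP => k; rewrite !mnmE.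
by rewrite (can2_eq (permK s) (permKV s)) eq_sym.
Qed.

End SignedSymmetrization.

Section LocalizedQuotient.
Context {n : nat} {f : {poly int}}.
Implicit Types (a b c : P n) (k l m : nat).
Local Notation D := (Dprod n f).

Lemma inJ0 : inJ n 0.
Proof. by exists 0; rewrite mul0r. Qed.

Lemma inJD a b : inJ n a -> inJ n b -> inJ n (a + b).
Proof. by move=> [ga ->] [gb ->]; exists (ga + gb); rewrite mulrDl. Qed.

Lemma inJMl c a : inJ n a -> inJ n (c * a).
Proof. by move=> [g ->]; exists (c * g); rewrite mulrA. Qed.

Lemma inJ_msym s a : inJ n a -> inJ n (msym s a).
Proof.
move=> [g ->]; exists (msym s g); rewrite msymM msymB msym1 rmorph_prod /=.
by under eq_bigr do rewrite msymX1; rewrite [in RHS](reindex_inj (@perm_inj _ s)).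
Qed.

Lemma msym_Ft s j : msym s (Ft n f j) = Ft n f (s j).
Proof.
rewrite /Ft raddf_sum; apply: eq_bigr => d _.
by rewrite /= msymZ rmorphXn /= msymX1.
Qed.

Lemma msym_Dprod s : msym s D = D.
Proof.
rewrite /Dprod rmorph_prod /=; under eq_bigr do rewrite msym_Ft.
by rewrite [RHS](reindex_inj (@perm_inj _ s)).
Qed.

Lemma R_eq_refl a k : R_eq n f a k a k.
Proof. by exists 0%N; rewrite subrr mulr0; apply: inJ0. Qed.

Lemma R_eq_sym {a k b l} : R_eq n f a k b l -> R_eq n f b l a k.
Proof.
move=> [r ab]; exists r; rewrite -opprB mulrN -mulN1r.
exact: inJMl.
Qed.

Lemma R_eq_trans {a k b m c l} :
  R_eq n f a k b m -> R_eq n f b m c l -> R_eq n f a k c l.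
Proof.
move=> [r1 ab] [r2 bc]; exists (r1 + r2 + m)%N.
have -> : D ^+ (r1 + r2 + m) * (a * D ^+ l - c * D ^+ k) =
    D ^+ (r2 + l) * (D ^+ r1 * (a * D ^+ m - b * D ^+ k)) +
    D ^+ (r1 + k) * (D ^+ r2 * (b * D ^+ l - c * D ^+ m)).
  by rewrite !exprD; ring.
by apply: inJD; apply: inJMl.
Qed.

Lemma R_eqD a1 a2 k b1 b2 l :
  R_eq n f a1 k b1 l -> R_eq n f a2 k b2 l -> R_eq n f (a1 + a2) k (b1 + b2) l.
Proof.
move=> [r1 ab1] [r2 ab2]; exists (r1 + r2)%N.
have -> : D ^+ (r1 + r2) * ((a1 + a2) * D ^+ l - (b1 + b2) * D ^+ k) =
    D ^+ r2 * (D ^+ r1 * (a1 * D ^+ l - b1 * D ^+ k)) +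
    D ^+ r1 * (D ^+ r2 * (a2 * D ^+ l - b2 * D ^+ k)).
  by rewrite !exprD; ring.
by apply: inJD; apply: inJMl.
Qed.

Lemma R_eq_sum (I : finType) (F G : I -> P n) k l :
  (forall i, R_eq n f (F i) k (G i) l) ->
  R_eq n f (\sum_i F i) k (\sum_i G i) l.
Proof.
move=> FG; apply: (big_ind2 (fun a b => R_eq n f a k b l)) => //.
- by exists 0%N; rewrite !mul0r subrr mulr0; apply: inJ0.
- by move=> *; apply: R_eqD.
Qed.

Lemma R_eqMl c a k b l : R_eq n f a k b l -> R_eq n f (c * a) k (c * b) l.
Proof.
move=> [r ab]; exists r.
by rewrite -!mulrA -mulrBr mulrCA; apply: inJMl.
Qed.

Lemma R_eqZ (x : rat) {a k b l} : R_eq n f a k b l -> R_eq n f (x *: a) k (x *: b) l.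
Proof. by rewrite -!mul_mpolyC; apply: R_eqMl. Qed.

Lemma R_eq_msym s {a k b l} : R_eq n f a k b l -> R_eq n f (msym s a) k (msym s b) l.
Proof.
move=> [r /(inJ_msym s) ab]; exists r.
by rewrite msymM msymB !msymM !rmorphXn /= msym_Dprod in ab.
Qed.

Lemma R_eq_alt {a k b l} : R_eq n f a k b l -> R_eq n f (alt a) k (alt b) l.
Proof. by move=> ab; apply: R_eq_sum => s; apply/R_eqZ/R_eq_msym. Qed.

Lemma R_sgn_inv_alt {a k} : R_sgn_inv n f a k -> R_eq n f (alt a) k (n`!%:R *: a) k.
Proof.
by move=> a_sgn; rewrite scaler_nat -card_Sn -sumr_const; apply: R_eq_sum.
Qed.

End LocalizedQuotient.

Section Generators.
Context {n' : nat} (f : {poly int}).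
Local Notation n := n'.+1.
Local Notation F := (Ft n f).
Local Notation X := (fun i : 'I_n => 'X_i : P n).

Lemma X_inj : injective X.
Proof.
move=> i j /(congr1 (fun p : P n => p@_U_(i))); rewrite !mcoeffXU eqxx.
by case: eqP => [->|_] // /eqP; rewrite eq_sym oner_eq0.
Qed.

Lemma alt_monomial (mu : 'X_{1..n}) j :
  alt ('X_[mu] * F j) = \det (alternant X (fun r => mu r) j F).
Proof.
rewrite /alt /determinant; apply: eq_bigr => s _.
rewrite -mul_mpolyC /sgnp rmorph_sign msymM msym_Ft msymX (@mpolyXE _ _ s).
congr (_ * _); rewrite (bigD1 j) //= [in RHS](bigD1 j) //= !mxE eqxx mulrAC mnmE permK.
by congr (_ * _); apply: eq_bigr => r /negbTE rj; rewrite mxE rj mulr1 mnmE permK.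
Qed.

Lemma q_interp a : q n f a = interp X (powx X a F) 0 0.
Proof.
rewrite (@interp_det _ _ _ _ 0 (qmat n f a)) // => [r k /negbTE r0|k].
  by rewrite !mxE -val_eqE /= in r0 *; rewrite r0.
by rewrite !mxE mulrC.
Qed.

Lemma msym_q s a : msym s (q n f a) = sgnp n s *: q n f a.
Proof.
pose mu : 'X_{1..n} := [multinom (if r == 0 :> nat then a else n' - r)%N | r < n].
suff -> : q n f a = alt ('X_[mu] * F 0) by rewrite msym_alt.
rewrite alt_monomial /q; congr (\det _); apply/matrixP => r k; rewrite !mxE mnmE.
by rewrite -val_eqE /=; case: eqP => _; rewrite ?mulr1 // mulrC.
Qed.

Lemma alt_in_ideal c i j :
  in_ideal (fun b : 'I_n' => q n f b) (alt (c * (F j - F i))).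
Proof.
elim/mpolyind: c => [|x mu c _ _ IH]; first by rewrite mul0r raddf0; apply: in_ideal0.
rewrite mulrDl raddfD /=; apply: in_idealD => //.
rewrite -scalerAl linearZ /= -mul_mpolyC; apply: in_idealMl.
rewrite mulrBr raddfB /= !alt_monomial.
by apply: eq_in_ideal (det_alternant_sub _ X_inj _ _ _ _) => b; rewrite q_interp.
Qed.

Definition consec_diff (ij : 'I_n * 'I_n) : P n :=
  if ij.2 == ij.1.+1 :> nat then F ij.2 - F ij.1 else 0.

Lemma in_ideal_consec_diff {p} : in_ideal consec_diff p ->
  exists c : 'I_n -> 'I_n -> P n,
    p = \sum_(i < n) \sum_(j < n | j == i.+1 :> nat) c i j * (F j - F i).
Proof.
move=> [h ->]; exists (fun i j => h (i, j)).
under [RHS]eq_bigr do rewrite big_mkcond; rewrite pair_bigA /=.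
by apply: eq_bigr => -[i j] _; rewrite /consec_diff /=; case: ifP; rewrite ?mulr0.
Qed.

Lemma Ft_sub_in_ideal k : in_ideal consec_diff (F k - F 0).
Proof.
rewrite -[k]inord_val; elim: (val k) (ltn_ord k) => [|m IH] lt_mn.
  rewrite (_ : inord 0 = 0) ?subrr; first exact: in_ideal0.
  by apply: val_inj; rewrite /= inordK.
rewrite -(subrK (F (inord m)) (F _)) -addrA; apply: in_idealD; last exact/IH/ltnW.
have <- : consec_diff (inord m, inord m.+1) = F (inord m.+1) - F (inord m).
  by rewrite /consec_diff /= !inordK ?eqxx // ltnW.
exact: in_ideal_gen.
Qed.

Lemma q_in_consec_diff a : (a < n')%N -> in_ideal consec_diff (q n f a).
Proof.
move=> lt_an; rewrite q_interp (interp0_powx _ _ _ lt_an).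
by apply: in_ideal_sum => k _; rewrite mulrC; apply/in_idealMl/Ft_sub_in_ideal.
Qed.

Lemma R_sgn_inv_q a : R_sgn_inv n f (q n f a) 0.
Proof. by move=> s; rewrite msym_q scalerA sgnp_mul_self scale1r; apply: R_eq_refl. Qed.

Lemma R_inI_q a : (a < n')%N -> R_inI n f (q n f a) 0.
Proof.
move=> lt_an; have [c q_eq] := in_ideal_consec_diff (q_in_consec_diff _ lt_an).
by exists c, 0%N; rewrite -q_eq; apply: R_eq_refl.
Qed.

Lemma R_sgn_inv_R_inI_generated a k : R_sgn_inv n f a k -> R_inI n f a k ->
  exists (c : 'I_n' -> P n) (l : nat),
    (forall i, R_sym n f (c i) l) /\ R_eq n f a k (\sum_(i < n') c i * q n f i) l.
Proof.
move=> a_sgn [c [l aG]]; set G := (X in R_eq _ _ _ _ X _) in aG.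
have [h altG] : in_ideal (fun b : 'I_n' => q n f b) (alt G).
  rewrite raddf_sum; apply: in_ideal_sum => i _.
  by rewrite raddf_sum; apply: in_ideal_sum => j _; apply: alt_in_ideal.
pose N : rat := n`!%:R; have N_neq0 : N != 0 by rewrite pnatr_eq0 -lt0n fact_gt0.
have symG := antisym_sym_coef _ _ _ _
  (fun s (b : 'I_n') => msym_q s b) (fun s => msym_alt s G) altG.
exists (fun i => N^-2 *: sym (h i)), l; split.
  by move=> i s; rewrite msymZ msym_sym; apply: R_eq_refl.
have := R_eqZ N^-1 (R_eq_trans (R_eq_sym (R_sgn_inv_alt a_sgn)) (R_eq_alt aG)).
rewrite scalerA mulVf // scale1r; under eq_bigr do rewrite -scalerAl.
by rewrite -scaler_sumr -symG scalerA -exprVn expr2 -mulrA mulVf // mulr1.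
Qed.

End Generators.

Theorem lemma3p10 (n : nat) (f : {poly int}) :
  (2 <= n)%N -> (1 < size f)%N ->
  (* each q_i lies in (I^sgn)^W *)
  (forall i : 'I_n.-1, R_sgn_inv n f (q n f i) 0 /\ R_inI n f (q n f i) 0) /\
  (* and they generate (I^sgn)^W as an R^W-module *)
  (forall (a : P n) (k : nat), R_sgn_inv n f a k -> R_inI n f a k ->
     exists (c : 'I_n.-1 -> P n) (l : nat),
       (forall i, R_sym n f (c i) l) /\
       R_eq n f a k (\sum_(i < n.-1) c i * q n f i) l).
Proof.
case: n => [//|n'] _ _; split; last exact: R_sgn_inv_R_inI_generated.
by move=> i; split; [apply: R_sgn_inv_q | apply/R_inI_q/ltn_ord].
Qed.
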